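(* For any $\mu>-1$ and $0<x<2\pi$ the following identities (with $x$-independent right-hand sides) hold: \[ \Im\big(e^{ix\mu}L(x,\mu)\big)+\int_0^{x}\frac{\sin(\mu+\frac{1}{2})y}{2\sin \frac{y}{2}}\,dy=\frac{\pi}{2} \] and \[ \Re\big(e^{ix\mu}L(x,\mu)\big)-\int_x^\pi\frac{\cos(\mu+\frac{1}{2})y\,dy}{2\sin\frac{y}{2}} =\Re\big(e^{i\pi\mu}T(\pi,\mu)\big)=-\mathrm{S}_{\pi/2}(2\mu+1)\,\cos\pi\mu . \]
   Context: $L(x,\mu)=\sum_{k=1}^\infty \frac{e^{ikx}}{k+\mu}$, with real part the cosine FJ sum $T(x,\mu)=\sum_{k=1}^\infty\frac{\cos kx}{k+\mu}$. The special value $\mathrm{S}_{\pi/2}(\lambda)=2\sum_{k=1}^\infty \frac{(-1)^{k-1}}{2k-1+\lambda}=-T\left(\pi,\frac{\lambda-1}{2}\right)$ (equivalently the imaginary part of $2\sum_{k\ge1}\frac{e^{(2k-1)i\pi/2}}{2k-1+\lambda}$). *)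

From Stdlib Require Import Reals.
From Coquelicot Require Export Coquelicot.
Open Scope R_scope.

Definition cis (t : R) : C := (cos t, sin t).

(* T(x,mu) = sum_{k>=1} cos(kx)/(k+mu)  (index shifted: k = n+1) *)
Definition T (x mu : R) : R :=
  Series (fun n : nat => cos (INR (S n) * x) / (INR (S n) + mu)).

Definition Tsin (x mu : R) : R :=
  Series (fun n : nat => sin (INR (S n) * x) / (INR (S n) + mu)).

(* L(x,mu) = sum_{k>=1} e^{ikx}/(k+mu), computed componentwise *)
Definition L (x mu : R) : C := (T x mu, Tsin x mu).

Definition S_pi2 (lam : R) : R :=
  2 * Series (fun n : nat => (-1) ^ n / (2 * INR (S n) - 1 + lam)).

From Stdlib Require Import Reals Lra.
From Coquelicot Require Import Coquelicot.
Open Scope R_scope.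

(* Put c_n = n + 1 + mu.  Integrating termwise and telescoping, the partial sums of
   sum sin (c_n x) / c_n and of sum (cos (c_n x) - cos (c_n pi)) / c_n become integrals
   of sin (c_N + 1/2) y and cos (c_N + 1/2) y against 1 / (2 sin (y/2)), minus the same
   integrals at frequency mu + 1/2.  By the Riemann-Lebesgue lemma the high-frequency
   integrals tend to 0, except for the Dirichlet integral over [0, pi], which is pi/2.
   At x = pi the cosine series is cos (pi mu) times the alternating series T (pi, mu).
   Finally e^{i x mu} L (x, mu) = sum e^{i c_n x} / c_n has exactly these two series as
   real and imaginary parts. *)

Lemma continuous_Rmult (f g : R -> R) y :
  continuous f y -> continuous g y -> continuous (fun y => f y * g y) y.
Proof. apply (continuous_mult f g). Qed.

Lemma ex_derive_continuous_R (f : R -> R) y : ex_derive f y -> continuous f y.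
Proof. apply (ex_derive_continuous (V := R_NormedModule)). Qed.

Lemma ex_RInt_continuous_R (f : R -> R) a b :
  (forall y, Rmin a b <= y <= Rmax a b -> continuous f y) -> ex_RInt f a b.
Proof. apply (ex_RInt_continuous (V := R_CompleteNormedModule)). Qed.

Lemma Rabs_mul_sin_le u z B : Rabs u <= B -> Rabs (u * sin z) <= B.
Proof.
  intros Hu. rewrite Rabs_mult.
  assert (Rabs (sin z) <= 1) by (apply Rabs_le, SIN_bound).
  assert (0 <= Rabs u) by apply Rabs_pos.
  assert (0 <= Rabs (sin z)) by apply Rabs_pos.
  nra.
Qed.

Section RiemannLebesgue.

Variables (g : R -> R) (a b c : R).
Hypothesis hg : forall y, a <= y <= b -> continuous g y.

Lemma ex_RInt_shifted_osc s w u v : u <= v -> a <= u + s -> v + s <= b ->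
  ex_RInt (fun y => g (y + s) * sin (w * y + c)) u v.
Proof.
  intros Huv Hu Hv. apply ex_RInt_continuous_R.
  rewrite Rmin_left, Rmax_right by lra. intros y Hy.
  apply continuous_Rmult.
  - apply (continuous_comp (fun y => y + s) g).
    + apply ex_derive_continuous_R. auto_derive. easy.
    + apply hg. lra.
  - apply ex_derive_continuous_R. auto_derive. easy.
Qed.

Lemma ex_RInt_osc w u v : u <= v -> a <= u -> v <= b ->
  ex_RInt (fun y => g y * sin (w * y + c)) u v.
Proof.
  intros Huv Hu Hv.
  apply (ex_RInt_ext (fun y => g (y + 0) * sin (w * y + c))).
  - intros y _. now rewrite Rplus_0_r.
  - apply ex_RInt_shifted_osc; lra.
Qed.

Lemma RInt_osc_half_period_shift w : a <= b -> 0 < w ->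
  RInt (fun y => g y * sin (w * y + c)) a b
  = - RInt (fun y => g (y + PI / w) * sin (w * y + c)) (a - PI / w) (b - PI / w).
Proof.
  intros Hab Hw. set (h := PI / w).
  assert (E := RInt_comp_lin (fun y => g y * sin (w * y + c)) 1 h (a - h) (b - h)).
  replace (1 * (a - h) + h) with a in E by ring.
  replace (1 * (b - h) + h) with b in E by ring.
  rewrite <- E by (apply ex_RInt_osc; lra).
  change (- ?r) with (opp r).
  rewrite <- (RInt_opp (V := R_CompleteNormedModule))
    by (apply ex_RInt_shifted_osc; lra).
  apply RInt_ext. intros y _.
  replace (w * (1 * y + h) + c) with (w * y + c + PI) by (unfold h; field; lra).
  replace (1 * y + h) with (y + h) by ring.
  unfold scal, opp; simpl. unfold mult; simpl.
  rewrite Rmult_1_l, neg_sin. symmetry. apply Ropp_mult_distr_r.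
Qed.

(* Averaging the integral with its half-period translate leaves only the increment
   of [g] over [PI / w] and two end pieces of length [PI / w]. *)
Lemma twice_RInt_osc w : 0 < w -> PI / w <= b - a ->
  2 * RInt (fun y => g y * sin (w * y + c)) a b
  = RInt (fun y => (g y - g (y + PI / w)) * sin (w * y + c)) a (b - PI / w)
    + RInt (fun y => g y * sin (w * y + c)) (b - PI / w) b
    - RInt (fun y => g (y + PI / w) * sin (w * y + c)) (a - PI / w) a.
Proof.
  intros Hw Hlong.
  assert (Hh : 0 < PI / w) by (apply Rdiv_lt_0_compat; [apply PI_RGT_0 | exact Hw]).
  assert (Hshift := RInt_osc_half_period_shift w ltac:(lra) Hw).
  set (h := PI / w) in *.
  set (f1 := fun y => g y * sin (w * y + c)) in *.
  set (f2 := fun y => g (y + h) * sin (w * y + c)) in *.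
  assert (Hhead : RInt f1 a b = RInt f1 a (b - h) + RInt f1 (b - h) b).
  { symmetry. apply (RInt_Chasles (V := R_CompleteNormedModule));
      apply ex_RInt_osc; lra. }
  assert (Htail : RInt f2 (a - h) (b - h) = RInt f2 (a - h) a + RInt f2 a (b - h)).
  { symmetry. apply (RInt_Chasles (V := R_CompleteNormedModule));
      apply ex_RInt_shifted_osc; lra. }
  assert (Hdiff : RInt f1 a (b - h) - RInt f2 a (b - h)
                  = RInt (fun y => (g y - g (y + h)) * sin (w * y + c)) a (b - h)).
  { rewrite <- (RInt_minus (V := R_CompleteNormedModule)).
    - apply RInt_ext. intros y _. unfold f1, f2, minus, plus, opp; simpl. ring.
    - apply ex_RInt_osc; lra.
    - apply ex_RInt_shifted_osc; lra. }
  lra.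
Qed.

Lemma abs_RInt_osc_le w B d : a <= b -> 0 < w ->
  (forall y, a <= y <= b -> Rabs (g y) <= B) ->
  (forall s t, a <= s <= b -> a <= t <= b -> Rabs (s - t) <= PI / w ->
     Rabs (g s - g t) <= d) ->
  Rabs (RInt (fun y => g y * sin (w * y + c)) a b) <= (b - a) * d / 2 + PI / w * B.
Proof.
  intros Hab Hw HB Hd.
  assert (Hh : 0 < PI / w) by (apply Rdiv_lt_0_compat; [apply PI_RGT_0 | exact Hw]).
  assert (Hd0 : 0 <= d).
  { apply (Rle_trans _ (Rabs (g a - g a))); [apply Rabs_pos | apply Hd; try lra].
    rewrite Rminus_diag, Rabs_R0. lra. }
  assert (HB0 : 0 <= B) by (apply (Rle_trans _ (Rabs (g a))); [apply Rabs_pos | apply HB; lra]).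
  destruct (Rle_lt_dec (b - a) (PI / w)) as [Hshort | Hlong].
  { assert (Rabs (RInt (fun y => g y * sin (w * y + c)) a b) <= (b - a) * B).
    { apply abs_RInt_le_const; [lra | apply ex_RInt_osc; lra |].
      intros t Ht. apply Rabs_mul_sin_le, HB; lra. }
    assert (0 <= (b - a) * d) by nra.
    nra. }
  assert (Htwice := twice_RInt_osc w Hw ltac:(lra)).
  set (h := PI / w) in *.
  assert (Bdiff : Rabs (RInt (fun y => (g y - g (y + h)) * sin (w * y + c)) a (b - h))
                  <= (b - h - a) * d).
  { apply abs_RInt_le_const; [lra | |].
    - apply (ex_RInt_ext (fun y => g y * sin (w * y + c) - g (y + h) * sin (w * y + c))).
      { intros y _. simpl. ring. }
      apply (ex_RInt_minus (V := R_NormedModule)).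
      + apply ex_RInt_osc; lra.
      + apply ex_RInt_shifted_osc; lra.
    - intros t Ht. apply Rabs_mul_sin_le, Hd; try lra.
      rewrite Rabs_left; lra. }
  assert (B1 : Rabs (RInt (fun y => g y * sin (w * y + c)) (b - h) b) <= h * B).
  { replace h with (b - (b - h)) at 2 by ring.
    apply abs_RInt_le_const; [lra | apply ex_RInt_osc; lra |].
    intros t Ht. apply Rabs_mul_sin_le, HB; lra. }
  assert (B2 : Rabs (RInt (fun y => g (y + h) * sin (w * y + c)) (a - h) a) <= h * B).
  { replace h with (a - (a - h)) at 2 by ring.
    apply abs_RInt_le_const; [lra | apply ex_RInt_shifted_osc; lra |].
    intros t Ht. apply Rabs_mul_sin_le, HB; lra. }
  assert (0 <= h * d) by (apply Rmult_le_pos; lra).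
  apply Rabs_le_between in Bdiff, B1, B2. apply Rabs_le_between.
  lra.
Qed.

Lemma Riemann_Lebesgue : a <= b ->
  is_lim (fun w => RInt (fun y => g y * sin (w * y + c)) a b) p_infty 0.
Proof.
  intros Hab. apply is_lim_spec. intros eps.
  assert (HPI := PI_RGT_0). assert (Heps := cond_pos eps).
  assert (Hpt : forall y, a <= y <= b -> continuity_pt g y).
  { intros y Hy. apply continuity_pt_filterlim, hg, Hy. }
  destruct (continuity_ab_maj (fun y => Rabs (g y)) a b Hab) as [m [Hm _]].
  { intros y Hy. apply continuity_pt_filterlim.
    apply (continuous_comp g Rabs); [apply hg, Hy |].
    apply continuity_pt_filterlim, Rcontinuity_abs. }
  set (B := Rabs (g m)) in Hm.
  assert (HB0 : 0 <= B) by apply Rabs_pos.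
  assert (Hd : 0 < eps / (b - a + 1)) by (apply Rdiv_lt_0_compat; lra).
  destruct (Heine g (fun y => a <= y <= b) (compact_P3 a b) Hpt (mkposreal _ Hd))
    as [delta Hdelta].
  assert (Hdelta0 := cond_pos delta).
  exists (PI / delta + 2 * PI * B / eps). intros w Hw.
  assert (0 <= PI / delta) by (apply Rlt_le, Rdiv_lt_0_compat; lra).
  assert (0 <= 2 * PI * B / eps)
    by (apply Rmult_le_pos; [nra | apply Rlt_le, Rinv_0_lt_compat; lra]).
  assert (Hw0 : 0 < w) by lra.
  assert (Hh : PI / w < delta).
  { apply (Rmult_lt_reg_r w); [lra |].
    replace (PI / w * w) with PI by (field; lra).
    replace PI with (PI / delta * delta) at 1 by (field; lra). nra. }
  assert (HhB : PI / w * B <= eps / 2).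
  { apply (Rmult_le_reg_r w); [lra |].
    replace (PI / w * B * w) with (PI * B) by (field; lra).
    replace (PI * B) with (2 * PI * B / eps * (eps / 2)) by (field; lra). nra. }
  assert (Hosc := abs_RInt_osc_le w B (eps / (b - a + 1)) Hab Hw0 Hm).
  rewrite Rminus_0_r. eapply Rle_lt_trans.
  { apply Hosc. intros s t Hs Ht Hst. apply Rlt_le, Hdelta; auto. lra. }
  assert ((b - a) * (eps / (b - a + 1)) < eps).
  { assert (eps / (b - a + 1) * (b - a + 1) = eps) by (field; lra). nra. }
  lra.
Qed.

End RiemannLebesgue.

Lemma Riemann_Lebesgue_seq (g : R -> R) (a b c : R) (w : nat -> R) :
  (forall y, Rmin a b <= y <= Rmax a b -> continuous g y) ->
  is_lim_seq w p_infty ->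
  is_lim_seq (fun N => RInt (fun y => g y * sin (w N * y + c)) a b) 0.
Proof.
  intros Hg Hw.
  destruct (Rle_dec a b) as [Hab | Hba].
  - rewrite Rmin_left, Rmax_right in Hg by exact Hab.
    exact (filterlim_comp _ _ _ w _ _ _ _ Hw (Riemann_Lebesgue g a b c Hg Hab)).
  - rewrite Rmin_right, Rmax_left in Hg by lra.
    assert (L := filterlim_comp _ _ _ w _ _ _ _ Hw (Riemann_Lebesgue g b a c Hg ltac:(lra))).
    apply is_lim_seq_opp in L. simpl in L. rewrite Ropp_0 in L.
    refine (is_lim_seq_ext _ _ _ _ L). intros N.
    apply (opp_RInt_swap (V := R_CompleteNormedModule)).
    apply (ex_RInt_osc g b a c Hg); lra.
Qed.

Lemma Riemann_Lebesgue_sin (g : R -> R) (a b : R) (w : nat -> R) :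
  (forall y, Rmin a b <= y <= Rmax a b -> continuous g y) ->
  is_lim_seq w p_infty ->
  is_lim_seq (fun N => RInt (fun y => g y * sin (w N * y)) a b) 0.
Proof.
  intros Hg Hw. refine (is_lim_seq_ext _ _ _ _ (Riemann_Lebesgue_seq g a b 0 w Hg Hw)).
  intros N. apply RInt_ext. intros y _. now rewrite Rplus_0_r.
Qed.

Lemma Riemann_Lebesgue_cos (g : R -> R) (a b : R) (w : nat -> R) :
  (forall y, Rmin a b <= y <= Rmax a b -> continuous g y) ->
  is_lim_seq w p_infty ->
  is_lim_seq (fun N => RInt (fun y => g y * cos (w N * y)) a b) 0.
Proof.
  intros Hg Hw.
  refine (is_lim_seq_ext _ _ _ _ (Riemann_Lebesgue_seq g a b (PI / 2) w Hg Hw)).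
  intros N. apply RInt_ext. intros y _.
  rewrite sin_plus, sin_PI2, cos_PI2. simpl. ring.
Qed.

Lemma is_lim_seq_INR_S_plus beta : is_lim_seq (fun N => INR (S N) + beta) p_infty.
Proof.
  apply (is_lim_seq_plus _ _ p_infty beta p_infty); [| apply is_lim_seq_const | easy].
  apply (is_lim_seq_incr_1 INR p_infty), is_lim_seq_INR.
Qed.

Definition sinc (y : R) : R := if Req_EM_T y 0 then 1 else sin y / y.

Lemma sinc_neq0 y : y <> 0 -> sinc y = sin y / y.
Proof. intros Hy. unfold sinc. destruct (Req_EM_T y 0); [contradiction | reflexivity]. Qed.

Lemma Rmult_sinc y : y * sinc y = sin y.
Proof.
  destruct (Req_EM_T y 0) as [-> | Hy].
  - rewrite sin_0. apply Rmult_0_l.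
  - rewrite sinc_neq0 by exact Hy. field. exact Hy.
Qed.

Lemma continuous_sinc y : continuous sinc y.
Proof.
  destruct (Req_EM_T y 0) as [-> | Hy].
  - apply continuity_pt_filterlim, continuity_pt_filterlim'.
    unfold sinc at 2. destruct (Req_EM_T 0 0) as [_ | []]; [| reflexivity].
    apply (filterlim_ext_loc (fun z => sin z / z)); [| exact is_lim_sinc_0].
    exists (mkposreal 1 Rlt_0_1). intros z _ Hz. symmetry. apply sinc_neq0, Hz.
  - apply (continuous_ext_loc _ (fun z => sin z / z)).
    + assert (Hr : 0 < Rabs y) by (apply Rabs_pos_lt, Hy).
      exists (mkposreal _ Hr). intros z Hz. symmetry. apply sinc_neq0.
      intros ->. apply (Rlt_irrefl (Rabs y)).
      change (Rabs (0 - y) < Rabs y) in Hz. rewrite Rminus_0_l, Rabs_Ropp in Hz. exact Hz.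
    + apply ex_derive_continuous_R. auto_derive. exact Hy.
Qed.

Lemma sinc_pos y : -PI < y < PI -> 0 < sinc y.
Proof.
  intros Hy. destruct (Req_EM_T y 0) as [-> | H0].
  { unfold sinc. destruct (Req_EM_T 0 0) as [_ | []]; [lra | reflexivity]. }
  rewrite sinc_neq0 by exact H0.
  destruct (Rlt_le_dec 0 y).
  - apply Rdiv_lt_0_compat; [apply sin_gt_0 |]; lra.
  - replace (sin y / y) with (sin (- y) / - y) by (rewrite sin_neg; field; exact H0).
    apply Rdiv_lt_0_compat; [apply sin_gt_0 |]; lra.
Qed.

Lemma sin_half_pos y : 0 < y < 2 * PI -> 0 < sin (y / 2).
Proof. intros Hy. apply sin_gt_0; lra. Qed.

Lemma sin_INR_mul_PI n : sin (INR n * PI) = 0.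
Proof.
  induction n as [| n IH].
  - rewrite Rmult_0_l. apply sin_0.
  - rewrite S_INR, Rmult_plus_distr_r, Rmult_1_l, neg_sin, IH. apply Ropp_0.
Qed.

Lemma cos_INR_mul_PI n : cos (INR n * PI) = (-1) ^ n.
Proof.
  induction n as [| n IH].
  - rewrite Rmult_0_l. apply cos_0.
  - rewrite S_INR, Rmult_plus_distr_r, Rmult_1_l, neg_cos, IH. simpl. ring.
Qed.

Lemma continuous_inv_sin_half y : 0 < y < 2 * PI ->
  continuous (fun y => / (2 * sin (y / 2))) y.
Proof.
  intros Hy. apply ex_derive_continuous_R. auto_derive.
  assert (H := sin_half_pos y Hy). unfold Rdiv in H. lra.
Qed.

Lemma Rmin_Rmax_PI_bounds x : 0 < x < 2 * PI -> 0 < Rmin x PI /\ Rmax x PI < 2 * PI.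
Proof.
  intros Hx. assert (HPI := PI_RGT_0). split.
  - apply Rmin_glb_lt; lra.
  - apply Rmax_lub_lt; lra.
Qed.

(* [sin (c y) / (2 sin (y/2))], written through [sinc] so that it is continuous
   across [y = 0]. *)
Definition dirichlet (c y : R) : R := c * sinc (c * y) / sinc (y / 2).

(* [(cos (mu y) - 1) / (2 sin (y/2))], continuous across [y = 0]. *)
Definition dirichlet_cos (mu y : R) : R := -2 * sin (mu / 2 * y) * dirichlet (mu / 2) y.

Lemma dirichlet_eq c y : sin (y / 2) <> 0 -> dirichlet c y = sin (c * y) / (2 * sin (y / 2)).
Proof.
  intros Hs.
  assert (Hy : y <> 0) by (intros ->; apply Hs; rewrite Rdiv_0_l; apply sin_0).
  unfold dirichlet. rewrite <- (Rmult_sinc (c * y)), (sinc_neq0 (y / 2)) by lra.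
  field. split; [exact Hs | exact Hy].
Qed.

Lemma continuous_dirichlet c y : -2 * PI < y < 2 * PI -> continuous (dirichlet c) y.
Proof.
  intros Hy. unfold dirichlet, Rdiv.
  apply continuous_Rmult.
  - apply continuous_Rmult; [apply continuous_const |].
    apply (continuous_comp (fun y => c * y) sinc);
      [apply ex_derive_continuous_R; auto_derive; easy | apply continuous_sinc].
  - apply (continuous_Rinv_comp (fun y => sinc (y / 2))).
    + apply (continuous_comp (fun y => y / 2) sinc);
        [apply ex_derive_continuous_R; auto_derive; easy | apply continuous_sinc].
    + apply Rgt_not_eq, sinc_pos. lra.
Qed.

Lemma continuous_dirichlet_cos mu y : -2 * PI < y < 2 * PI -> continuous (dirichlet_cos mu) y.
Proof.
  intros Hy. unfold dirichlet_cos.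
  apply continuous_Rmult; [| apply continuous_dirichlet, Hy].
  apply ex_derive_continuous_R. auto_derive. easy.
Qed.

Lemma ex_RInt_dirichlet c a b : -2 * PI < Rmin a b -> Rmax a b < 2 * PI ->
  ex_RInt (dirichlet c) a b.
Proof.
  intros Ha Hb. apply ex_RInt_continuous_R. intros y Hy.
  apply continuous_dirichlet. lra.
Qed.

Lemma dirichlet_add A mu y : sin (y / 2) <> 0 ->
  dirichlet (A + mu) y
  = dirichlet A y + (dirichlet_cos mu y * sin (A * y) + dirichlet mu y * cos (A * y)).
Proof.
  intros Hs. unfold dirichlet_cos.
  assert (Hc : cos (mu * y) = 1 - 2 * sin (mu / 2 * y) * sin (mu / 2 * y)).
  { replace (mu * y) with (2 * (mu / 2 * y)) by field. apply cos_2a_sin. }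
  rewrite !dirichlet_eq by exact Hs.
  replace ((A + mu) * y) with (A * y + mu * y) by ring.
  rewrite sin_plus, Hc. field. exact Hs.
Qed.

Lemma is_RInt_sum_n (f : nat -> R -> R) (I : nat -> R) a b N :
  (forall n, is_RInt (f n) a b (I n)) ->
  is_RInt (fun y => sum_n (fun n => f n y) N) a b (sum_n I N).
Proof.
  intros Hf. induction N as [| N IH].
  - rewrite sum_O. apply (is_RInt_ext (f 0%nat)); [| apply Hf].
    intros y _. now rewrite sum_O.
  - rewrite sum_Sn.
    apply (is_RInt_ext (fun y => plus (sum_n (fun n => f n y) N) (f (S N) y))).
    + intros y _. now rewrite sum_Sn.
    + apply (is_RInt_plus (V := R_NormedModule)); [exact IH | apply Hf].
Qed.

Lemma is_RInt_cos_mul k a b : k <> 0 ->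
  is_RInt (fun y => cos (k * y)) a b ((sin (k * b) - sin (k * a)) / k).
Proof.
  intros Hk.
  replace ((sin (k * b) - sin (k * a)) / k) with (minus (sin (k * b) / k) (sin (k * a) / k))
    by (unfold minus, plus, opp; simpl; field; exact Hk).
  apply (is_RInt_derive (V := R_CompleteNormedModule) (fun y => sin (k * y) / k)).
  - intros y _. auto_derive; [easy | field; exact Hk].
  - intros y _. apply ex_derive_continuous_R. auto_derive. easy.
Qed.

Lemma is_RInt_sin_mul k a b : k <> 0 ->
  is_RInt (fun y => sin (k * y)) a b ((cos (k * a) - cos (k * b)) / k).
Proof.
  intros Hk.
  replace ((cos (k * a) - cos (k * b)) / k) with (minus (- cos (k * b) / k) (- cos (k * a) / k))
    by (unfold minus, plus, opp; simpl; field; exact Hk).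
  apply (is_RInt_derive (V := R_CompleteNormedModule) (fun y => - cos (k * y) / k)).
  - intros y _. auto_derive; [easy | field; exact Hk].
  - intros y _. apply ex_derive_continuous_R. auto_derive. easy.
Qed.

Lemma sum_cos_telescope nu y N :
  2 * sin (y / 2) * sum_n (fun n => cos ((INR (S n) + nu) * y)) N
  = sin ((INR (S N) + nu + 1 / 2) * y) - sin ((nu + 1 / 2) * y).
Proof.
  assert (Hstep : forall k, 2 * sin (y / 2) * cos (k * y)
                            = sin ((k + 1 / 2) * y) - sin ((k - 1 / 2) * y)).
  { intros k. replace ((k + 1 / 2) * y) with (k * y + y / 2) by field.
    replace ((k - 1 / 2) * y) with (k * y - y / 2) by field.
    rewrite sin_plus, sin_minus. ring. }
  induction N as [| N IH].
  - rewrite sum_O, Hstep.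
    replace (INR 1 + nu - 1 / 2) with (nu + 1 / 2) by (rewrite INR_1; lra).
    reflexivity.
  - rewrite sum_Sn, Rmult_plus_distr_l, IH, Hstep, !S_INR.
    replace (INR N + 1 + 1 + nu - 1 / 2) with (INR N + 1 + nu + 1 / 2) by lra.
    ring.
Qed.

Lemma sum_sin_telescope nu y N :
  2 * sin (y / 2) * sum_n (fun n => sin ((INR (S n) + nu) * y)) N
  = cos ((nu + 1 / 2) * y) - cos ((INR (S N) + nu + 1 / 2) * y).
Proof.
  assert (Hstep : forall k, 2 * sin (y / 2) * sin (k * y)
                            = cos ((k - 1 / 2) * y) - cos ((k + 1 / 2) * y)).
  { intros k. replace ((k + 1 / 2) * y) with (k * y + y / 2) by field.
    replace ((k - 1 / 2) * y) with (k * y - y / 2) by field.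
    rewrite cos_plus, cos_minus. ring. }
  induction N as [| N IH].
  - rewrite sum_O, Hstep.
    replace (INR 1 + nu - 1 / 2) with (nu + 1 / 2) by (rewrite INR_1; lra).
    reflexivity.
  - rewrite sum_Sn, Rmult_plus_distr_l, IH, Hstep, !S_INR.
    replace (INR N + 1 + 1 + nu - 1 / 2) with (INR N + 1 + nu + 1 / 2) by lra.
    ring.
Qed.

Lemma shifted_freq_pos mu n : -1 < mu -> 0 < INR (S n) + mu.
Proof. intros Hmu. rewrite S_INR. assert (H := pos_INR n). lra. Qed.

Lemma sum_sin_div_eq_RInt_dirichlet mu x N : -1 < mu -> 0 < x < 2 * PI ->
  sum_n (fun n => sin ((INR (S n) + mu) * x) / (INR (S n) + mu)) N
  = RInt (dirichlet (INR (S N) + mu + 1 / 2)) 0 x - RInt (dirichlet (mu + 1 / 2)) 0 x.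
Proof.
  intros Hmu Hx.
  assert (HPI := PI_RGT_0).
  rewrite <- (RInt_minus (V := R_CompleteNormedModule))
    by (apply ex_RInt_dirichlet; rewrite ?Rmin_left, ?Rmax_right; lra).
  symmetry. apply is_RInt_unique.
  apply (is_RInt_ext (fun y => sum_n (fun n => cos ((INR (S n) + mu) * y)) N)).
  - rewrite Rmin_left, Rmax_right by lra. intros y Hy.
    assert (Hs := sin_half_pos y ltac:(lra)).
    rewrite !dirichlet_eq by lra.
    apply (Rmult_eq_reg_l (2 * sin (y / 2))); [| lra].
    rewrite sum_cos_telescope. unfold minus, plus, opp; simpl. field. lra.
  - erewrite sum_n_ext.
    + apply is_RInt_sum_n. intros n.
      apply is_RInt_cos_mul, Rgt_not_eq, shifted_freq_pos, Hmu.
    + intros n. cbv beta. rewrite Rmult_0_r, sin_0, Rminus_0_r. reflexivity.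
Qed.

Lemma sum_cos_div_sub_eq_RInt mu x N : -1 < mu -> 0 < x < 2 * PI ->
  sum_n (fun n => (cos ((INR (S n) + mu) * x) - cos ((INR (S n) + mu) * PI))
                  / (INR (S n) + mu)) N
  = RInt (fun y => cos ((mu + 1 / 2) * y) / (2 * sin (y / 2))) x PI
    - RInt (fun y => / (2 * sin (y / 2)) * cos ((INR (S N) + mu + 1 / 2) * y)) x PI.
Proof.
  intros Hmu Hx.
  destruct (Rmin_Rmax_PI_bounds x Hx) as [Hmin Hmax].
  rewrite <- (RInt_minus (V := R_CompleteNormedModule)).
  - symmetry. apply is_RInt_unique.
    apply (is_RInt_ext (fun y => sum_n (fun n => sin ((INR (S n) + mu) * y)) N)).
    + intros y Hy.
      assert (Hs := sin_half_pos y ltac:(lra)).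
      apply (Rmult_eq_reg_l (2 * sin (y / 2))); [| lra].
      rewrite sum_sin_telescope. unfold minus, plus, opp; simpl. field. lra.
    + apply is_RInt_sum_n. intros n.
      apply is_RInt_sin_mul, Rgt_not_eq, shifted_freq_pos, Hmu.
  - apply ex_RInt_continuous_R. intros y Hy. unfold Rdiv.
    apply continuous_Rmult; [| apply continuous_inv_sin_half; lra].
    apply ex_derive_continuous_R. auto_derive. easy.
  - apply ex_RInt_continuous_R. intros y Hy.
    apply continuous_Rmult; [apply continuous_inv_sin_half; lra |].
    apply ex_derive_continuous_R. auto_derive. easy.
Qed.

Lemma RInt_dirichlet_0_PI N : RInt (dirichlet (INR (S N) + 1 / 2)) 0 PI = PI / 2.
Proof.
  assert (HPI := PI_RGT_0).
  assert (Hhalf : RInt (dirichlet (1 / 2)) 0 PI = PI / 2).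
  { rewrite (RInt_ext _ (fun _ => 1 / 2)), RInt_const.
    - unfold scal; simpl. unfold mult; simpl. unfold Rdiv. now rewrite Rminus_0_r, Rmult_1_l.
    - rewrite Rmin_left, Rmax_right by lra. intros y Hy.
      assert (Hs := sin_half_pos y ltac:(lra)).
      rewrite dirichlet_eq by lra.
      replace (1 / 2 * y) with (y / 2) by field. simpl. field. lra. }
  assert (H := sum_sin_div_eq_RInt_dirichlet 0 PI N ltac:(lra) ltac:(lra)).
  rewrite Rplus_0_r, Rplus_0_l, Hhalf in H.
  rewrite (sum_n_ext _ (fun _ => 0)) in H
    by (intros n; rewrite Rplus_0_r, sin_INR_mul_PI; apply Rdiv_0_l).
  change (sum_n (fun _ => 0) N) with (sum_n_m (fun _ => @zero R_AbelianMonoid) 0 N) in H.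
  rewrite sum_n_m_const_zero in H. change (@zero R_AbelianMonoid) with 0 in H. lra.
Qed.

Lemma RInt_dirichlet_add_split A mu x : 0 < x < 2 * PI ->
  RInt (dirichlet (A + mu)) 0 x
  = RInt (dirichlet A) 0 PI
    + RInt (fun y => / (2 * sin (y / 2)) * sin (A * y)) PI x
    + RInt (fun y => dirichlet_cos mu y * sin (A * y)) 0 x
    + RInt (fun y => dirichlet mu y * cos (A * y)) 0 x.
Proof.
  intros Hx. assert (HPI := PI_RGT_0).
  destruct (Rmin_Rmax_PI_bounds x Hx) as [Hmin Hmax].
  rewrite Rmin_comm in Hmin. rewrite Rmax_comm in Hmax.
  assert (HA : ex_RInt (dirichlet A) 0 x)
    by (apply ex_RInt_dirichlet; rewrite ?Rmin_left, ?Rmax_right; lra).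
  assert (Hsin : ex_RInt (fun y => dirichlet_cos mu y * sin (A * y)) 0 x).
  { apply ex_RInt_continuous_R. rewrite Rmin_left, Rmax_right by lra. intros y Hy.
    apply continuous_Rmult; [apply continuous_dirichlet_cos; lra |].
    apply ex_derive_continuous_R. auto_derive. easy. }
  assert (Hcos : ex_RInt (fun y => dirichlet mu y * cos (A * y)) 0 x).
  { apply ex_RInt_continuous_R. rewrite Rmin_left, Rmax_right by lra. intros y Hy.
    apply continuous_Rmult; [apply continuous_dirichlet; lra |].
    apply ex_derive_continuous_R. auto_derive. easy. }
  assert (Hsplit : RInt (dirichlet (A + mu)) 0 x
     = RInt (dirichlet A) 0 x
       + (RInt (fun y => dirichlet_cos mu y * sin (A * y)) 0 x
          + RInt (fun y => dirichlet mu y * cos (A * y)) 0 x)).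
  { apply is_RInt_unique.
    apply (is_RInt_ext (fun y => plus (dirichlet A y)
             (plus (dirichlet_cos mu y * sin (A * y)) (dirichlet mu y * cos (A * y))))).
    - rewrite Rmin_left, Rmax_right by lra. intros y Hy. symmetry.
      apply dirichlet_add. apply Rgt_not_eq, sin_half_pos. lra.
    - apply (is_RInt_plus (V := R_NormedModule)); [| apply (is_RInt_plus (V := R_NormedModule))];
        apply (RInt_correct (V := R_CompleteNormedModule)); assumption. }
  rewrite Hsplit.
  rewrite <- (RInt_Chasles (V := R_CompleteNormedModule) (dirichlet A) 0 PI x).
  2: apply ex_RInt_dirichlet; rewrite ?Rmin_left, ?Rmax_right; lra.
  2: apply ex_RInt_dirichlet; lra.
  rewrite (RInt_ext (dirichlet A) (fun y => / (2 * sin (y / 2)) * sin (A * y)) PI x).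
  - unfold plus; simpl. ring.
  - intros y Hy. assert (Hs := sin_half_pos y ltac:(lra)).
    rewrite dirichlet_eq by lra. simpl. field. lra.
Qed.

(* The frequency is written [A + mu] with [A] a half-integer: the [dirichlet A] part
   integrates to exactly [PI / 2] over [0, PI], everything else oscillates away. *)
Lemma RInt_dirichlet_lim mu x : 0 < x < 2 * PI ->
  is_lim_seq (fun N => RInt (dirichlet (INR (S N) + mu + 1 / 2)) 0 x) (PI / 2).
Proof.
  intros Hx. assert (HPI := PI_RGT_0).
  destruct (Rmin_Rmax_PI_bounds x Hx) as [Hmin Hmax].
  rewrite Rmin_comm in Hmin. rewrite Rmax_comm in Hmax.
  set (A N := INR (S N) + 1 / 2).
  assert (HA : is_lim_seq A p_infty) by apply is_lim_seq_INR_S_plus.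
  assert (L1 : is_lim_seq (fun N => RInt (fun y => / (2 * sin (y / 2)) * sin (A N * y)) PI x) 0).
  { apply Riemann_Lebesgue_sin; [| exact HA].
    intros y Hy. apply continuous_inv_sin_half. lra. }
  assert (L2 : is_lim_seq (fun N => RInt (fun y => dirichlet_cos mu y * sin (A N * y)) 0 x) 0).
  { apply Riemann_Lebesgue_sin; [| exact HA].
    rewrite Rmin_left, Rmax_right by lra. intros y Hy.
    apply continuous_dirichlet_cos. lra. }
  assert (L3 : is_lim_seq (fun N => RInt (fun y => dirichlet mu y * cos (A N * y)) 0 x) 0).
  { apply Riemann_Lebesgue_cos; [| exact HA].
    rewrite Rmin_left, Rmax_right by lra. intros y Hy.
    apply continuous_dirichlet. lra. }
  assert (L := is_lim_seq_plus' _ _ _ _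
                 (is_lim_seq_plus' _ _ _ _
                    (is_lim_seq_plus' _ _ _ _ (is_lim_seq_const (PI / 2)) L1) L2) L3).
  rewrite !Rplus_0_r in L.
  refine (is_lim_seq_ext _ _ _ _ L). intros N.
  replace (INR (S N) + mu + 1 / 2) with (A N + mu) by (unfold A; ring).
  rewrite RInt_dirichlet_add_split by exact Hx.
  unfold A. rewrite RInt_dirichlet_0_PI. reflexivity.
Qed.

Lemma is_series_sin_shifted mu x : -1 < mu -> 0 < x < 2 * PI ->
  is_series (fun n => sin ((INR (S n) + mu) * x) / (INR (S n) + mu))
    (PI / 2 - RInt (fun y => sin ((mu + 1 / 2) * y) / (2 * sin (y / 2))) 0 x).
Proof.
  intros Hmu Hx.
  rewrite (RInt_ext _ (dirichlet (mu + 1 / 2))).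
  2:{ rewrite Rmin_left, Rmax_right by lra. intros y Hy. symmetry.
      apply dirichlet_eq, Rgt_not_eq, sin_half_pos. lra. }
  assert (L := is_lim_seq_minus' _ _ _ _ (RInt_dirichlet_lim mu x Hx)
                 (is_lim_seq_const (RInt (dirichlet (mu + 1 / 2)) 0 x))).
  exact (is_lim_seq_ext _ _ _ (fun N => eq_sym (sum_sin_div_eq_RInt_dirichlet mu x N Hmu Hx)) L).
Qed.

Lemma ex_series_alternating (u : nat -> R) :
  (forall n, u (S n) <= u n) -> is_lim_seq u 0 -> ex_series (fun n => (-1) ^ n * u n).
Proof.
  intros Hdec Hlim.
  destruct (alternated_series u Hdec (proj1 (is_lim_seq_Reals u 0) Hlim)) as [l Hl].
  exists l. apply is_series_Reals. exact Hl.
Qed.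

Lemma ex_series_cos_INR_PI_div mu : -1 < mu ->
  ex_series (fun n => cos (INR (S n) * PI) / (INR (S n) + mu)).
Proof.
  intros Hmu.
  apply (ex_series_ext (fun n => -1 * ((-1) ^ n * / (INR (S n) + mu)))).
  { intros n. rewrite cos_INR_mul_PI. simpl. unfold Rdiv. ring. }
  apply (ex_series_scal_l (V := R_NormedModule)), ex_series_alternating.
  - intros n. apply Rinv_le_contravar; [apply shifted_freq_pos, Hmu |].
    rewrite (S_INR (S n)). lra.
  - apply (is_lim_seq_inv _ p_infty); [apply is_lim_seq_INR_S_plus | discriminate].
Qed.

Lemma is_series_lin_comb (u v w : nat -> R) (U V p q : R) :
  (forall n, w n = p * u n + q * v n) ->
  is_series u U -> is_series v V -> is_series w (p * U + q * V).
Proof.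
  intros Hw Hu Hv.
  apply (is_series_ext (fun n => p * u n + q * v n)); [intros n; symmetry; apply Hw |].
  exact (is_series_plus _ _ _ _ (is_series_scal_l p u U Hu) (is_series_scal_l q v V Hv)).
Qed.

Lemma is_series_cos_shifted_PI mu : -1 < mu ->
  is_series (fun n => cos ((INR (S n) + mu) * PI) / (INR (S n) + mu)) (cos (PI * mu) * T PI mu).
Proof.
  intros Hmu.
  apply (is_series_ext (fun n => cos (PI * mu) * (cos (INR (S n) * PI) / (INR (S n) + mu)))).
  { intros n. rewrite Rmult_plus_distr_r, cos_plus, sin_INR_mul_PI, (Rmult_comm mu PI).
    simpl. unfold Rdiv. ring. }
  apply (is_series_scal_l (V := R_NormedModule)), Series_correct, ex_series_cos_INR_PI_div, Hmu.
Qed.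

Lemma is_series_cos_shifted mu x : -1 < mu -> 0 < x < 2 * PI ->
  is_series (fun n => cos ((INR (S n) + mu) * x) / (INR (S n) + mu))
    (cos (PI * mu) * T PI mu
     + RInt (fun y => cos ((mu + 1 / 2) * y) / (2 * sin (y / 2))) x PI).
Proof.
  intros Hmu Hx.
  set (J := RInt (fun y => cos ((mu + 1 / 2) * y) / (2 * sin (y / 2))) x PI).
  assert (Hw : is_lim_seq (fun N => INR (S N) + mu + 1 / 2) p_infty).
  { apply (is_lim_seq_ext (fun N => INR (S N) + (mu + 1 / 2))).
    - intros N. symmetry. apply Rplus_assoc.
    - apply is_lim_seq_INR_S_plus. }
  assert (L : is_lim_seq (fun N => RInt (fun y => / (2 * sin (y / 2))
                                     * cos ((INR (S N) + mu + 1 / 2) * y)) x PI) 0).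
  { apply Riemann_Lebesgue_cos; [| exact Hw].
    destruct (Rmin_Rmax_PI_bounds x Hx). intros y Hy. apply continuous_inv_sin_half. lra. }
  assert (L' := is_lim_seq_minus' _ _ _ _ (is_lim_seq_const J) L).
  rewrite Rminus_0_r in L'.
  assert (Hdiff : is_series (fun n => (cos ((INR (S n) + mu) * x) - cos ((INR (S n) + mu) * PI))
                                      / (INR (S n) + mu)) J)
    by exact (is_lim_seq_ext _ _ _ (fun N => eq_sym (sum_cos_div_sub_eq_RInt mu x N Hmu Hx)) L').
  rewrite Rplus_comm, <- (Rmult_1_l J), <- (Rmult_1_l (cos (PI * mu) * T PI mu)).
  refine (is_series_lin_comb _ _ _ _ _ 1 1 _ Hdiff (is_series_cos_shifted_PI mu Hmu)).
  intros n. field. apply Rgt_not_eq, shifted_freq_pos, Hmu.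
Qed.

Lemma cis_mul_L mu x I J : -1 < mu ->
  is_series (fun n => sin ((INR (S n) + mu) * x) / (INR (S n) + mu)) I ->
  is_series (fun n => cos ((INR (S n) + mu) * x) / (INR (S n) + mu)) J ->
  Cmult (cis (x * mu)) (L x mu) = (J, I).
Proof.
  intros Hmu HI HJ.
  assert (Hc : forall n, INR (S n) + mu <> 0)
    by (intros n; apply Rgt_not_eq, shifted_freq_pos, Hmu).
  assert (HT : T x mu = cos (x * mu) * J + sin (x * mu) * I).
  { apply is_series_unique.
    refine (is_series_lin_comb _ _ _ _ _ _ _ _ HJ HI). intros n.
    replace (INR (S n) * x) with ((INR (S n) + mu) * x - x * mu) by ring.
    rewrite cos_minus. field. apply Hc. }
  assert (HTs : Tsin x mu = cos (x * mu) * I + - sin (x * mu) * J).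
  { apply is_series_unique.
    refine (is_series_lin_comb _ _ _ _ _ _ _ _ HI HJ). intros n.
    replace (INR (S n) * x) with ((INR (S n) + mu) * x - x * mu) by ring.
    rewrite sin_minus. field. apply Hc. }
  assert (Hpyth := sin2_cos2 (x * mu)). unfold Rsqr in Hpyth.
  unfold Cmult, cis, L; simpl. rewrite HT, HTs. f_equal.
  - transitivity (J * (sin (x * mu) * sin (x * mu) + cos (x * mu) * cos (x * mu)));
      [ring | rewrite Hpyth; ring].
  - transitivity (I * (sin (x * mu) * sin (x * mu) + cos (x * mu) * cos (x * mu)));
      [ring | rewrite Hpyth; ring].
Qed.

Lemma S_pi2_eq_opp_T_PI mu : -1 < mu -> S_pi2 (2 * mu + 1) = - T PI mu.
Proof.
  intros Hmu. unfold S_pi2, T.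
  rewrite (Series_ext _ (fun n => -1 * (/ 2 * (cos (INR (S n) * PI) / (INR (S n) + mu))))).
  - rewrite 2!Series_scal_l. field.
  - intros n. assert (Hn := shifted_freq_pos mu n Hmu).
    rewrite cos_INR_mul_PI. simpl pow. field. split; lra.
Qed.

Theorem proposition7 (mu x : R) (hmu : -1 < mu) (hx : 0 < x < 2 * PI) :
  Im (Cmult (cis (x * mu)) (L x mu))
    + RInt (fun y => sin ((mu + 1/2) * y) / (2 * sin (y / 2))) 0 x = PI / 2
  /\
  Re (Cmult (cis (x * mu)) (L x mu))
    - RInt (fun y => cos ((mu + 1/2) * y) / (2 * sin (y / 2))) x PI
    = Re (Cmult (cis (PI * mu)) (RtoC (T PI mu)))
  /\
  Re (Cmult (cis (PI * mu)) (RtoC (T PI mu))) = - S_pi2 (2 * mu + 1) * cos (PI * mu).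
Proof.
  rewrite (cis_mul_L mu x _ _ hmu (is_series_sin_shifted mu x hmu hx)
                                 (is_series_cos_shifted mu x hmu hx)).
  rewrite S_pi2_eq_opp_T_PI by exact hmu.
  unfold Cmult, cis, RtoC, Re, Im; simpl.
  split; [| split]; ring.
Qed.
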